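(* Let $d,m\ge 1$, let $\mathcal{X}\subseteq\mathbb{R}^m$, let $u_{\min},u_{\max}\in\mathbb{R}^d$ with $u_{\min}<u_{\max}$ componentwise, and let $\mathcal{U}=\{u\in\mathbb{R}^d:\ u_{\min}\le u\le u_{\max}\}$ (componentwise inequalities). Let $\Phi_s:\mathcal{X}\to\mathcal{X}$, $F_c\in\mathbb{R}^{m\times d}$, $\nu>0$, and assume $A:=F_c^\top F_c+\nu I_d$ has full rank. Fix $x_{(n)}\in\mathcal{X}$ and a reference value $x^{\mathrm{ref}}(t_{n+1})\in\mathcal{X}$, and define $$L_n(u)=\big|\Phi_s(x_{(n)})+F_c u-x^{\mathrm{ref}}(t_{n+1})\big|^2+\nu|u|^2 .$$ Then the problem $\min_{u\in\mathcal{U}}L_n(u)$ has a unique solution $u^*_{(n)}$. Let $(\eta^{*,1}_{(n)},\eta^{*,2}_{(n)})\in\mathbb{R}^d_{\ge0}\times\mathbb{R}^d_{\ge0}$ be the corresponding Lagrange multipliers of the constraints $u-u_{\max}\le 0$ and $u_{\min}-u\le 0$, and let $\lambda_A^{\min},\lambda_A^{\max}>0$ be the smallest and largest eigenvalues of $A$. Then for all $u\in\mathcal{U}$, $$\lambda_A^{\min}|u-u^*_{(n)}|^2\le L_n(u)-L_n(u^*_{(n)})\le\big(|\eta^{*,1}_{(n)}|+|\eta^{*,2}_{(n)}|\big)|u-u^*_{(n)}|+\lambda_A^{\max}|u-u^*_{(n)}|^2 .$$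
   Context: $|\cdot|$ is the Euclidean norm. The Lagrange multipliers are the nonnegative vectors satisfying the KKT conditions $2(F_c^\top F_c+\nu I_d)u^*_{(n)}-2F_c^\top(\Phi_s(x_{(n)})-x^{\mathrm{ref}}(t_{n+1}))+\eta^{*,1}_{(n)}-\eta^{*,2}_{(n)}=0$ together with complementary slackness $\langle\eta^{*,1}_{(n)},u^*_{(n)}-u_{\max}\rangle=0$, $\langle\eta^{*,2}_{(n)},u_{\min}-u^*_{(n)}\rangle=0$. *)

From HB Require Import structures.
From mathcomp Require Import all_boot all_order all_algebra.
From mathcomp Require Export reals.
Set Implicit Arguments. Unset Strict Implicit. Unset Printing Implicit Defensive.
Import Order.TTheory GRing.Theory Num.Theory.
Local Open Scope ring_scope.

Definition dotv (R : realType) (k : nat) (v w : 'cV[R]_k) : R :=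
  \sum_(i < k) v i 0 * w i 0.

Definition enorm (R : realType) (k : nat) (v : 'cV[R]_k) : R :=
  Num.sqrt (dotv v v).

Definition vle (R : realType) (k : nat) (v w : 'cV[R]_k) : Prop :=
  forall i : 'I_k, v i 0 <= w i 0.

Definition box (R : realType) (d : nat) (umin umax : 'cV[R]_d) (u : 'cV[R]_d) : Prop :=
  vle umin u /\ vle u umax.

(* L_n(u) = |Phi_s(x_n) + F_c u - xref|^2 + nu |u|^2 ; here phix = Phi_s(x_n). *)
Definition Ln (R : realType) (m d : nat) (Fc : 'M[R]_(m, d)) (nu : R)
  (phix xref : 'cV[R]_m) (u : 'cV[R]_d) : R :=
  enorm (phix + Fc *m u - xref) ^+ 2 + nu * enorm u ^+ 2.

(* Lagrange multipliers (eta1, eta2) of the constraints u - umax <= 0 and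
   umin - u <= 0 at ustar: nonnegativity, stationarity of the Lagrangian
   grad L_n(ustar) + eta1 - eta2 = 0, where
   grad L_n(u) = 2 (Fc^T Fc + nu I) u + 2 Fc^T (phix - xref),
   and complementary slackness. *)
Definition lagrange_mult (R : realType) (m d : nat) (Fc : 'M[R]_(m, d)) (nu : R)
  (phix xref : 'cV[R]_m) (umin umax ustar eta1 eta2 : 'cV[R]_d) : Prop :=
  vle 0 eta1 /\ vle 0 eta2 /\
  (2%:R *: ((Fc^T *m Fc + nu%:M) *m ustar) + 2%:R *: (Fc^T *m (phix - xref))
     + eta1 - eta2 = 0) /\
  dotv eta1 (ustar - umax) = 0 /\
  dotv eta2 (umin - ustar) = 0.

Definition min_eigenvalue (R : realType) (d : nat) (A : 'M[R]_d) (lam : R) : Prop :=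
  eigenvalue A lam /\ forall a, eigenvalue A a -> lam <= a.
Definition max_eigenvalue (R : realType) (d : nat) (A : 'M[R]_d) (lam : R) : Prop :=
  eigenvalue A lam /\ forall a, eigenvalue A a -> a <= lam.

(* L_n is a quadratic with Hessian A = F_c^T F_c + nu I: with q h = h^T A h,
     L_n (u + h) = L_n u + 2 <A u + F_c^T (Phi_s x_n - x_ref), h> + q h,
   and q h >= nu |h|^2.  A minimizer over the compact box exists by
   continuity, and it is unique because for two minimizers u, v the midpoint
   identity L_n u + L_n v = 2 L_n ((u + v) / 2) + 2 q ((v - u) / 2) forces
   q ((v - u) / 2) <= 0.  At u*, stationarity of the Lagrangian turns the linear
   term into <eta2 - eta1, u - u*>, which complementary slackness makes
   nonnegative on the box and Cauchy-Schwarz bounds by (|eta1| + |eta2|) |u - u*|.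
   The quadratic term lies between the extreme eigenvalues: the minimum mu of
   q on the unit sphere is attained at some x, and A - mu I is positive
   semidefinite and vanishes at x, so (A - mu I) x = 0; apply this to A and -A. *)

From HB Require Import structures.
From mathcomp Require Import all_boot all_order all_algebra reals.
From mathcomp Require Import ring lra.
From mathcomp Require Import classical_sets boolp topology normedtype derive.
Import Order.TTheory GRing.Theory Num.Theory.
Import numFieldNormedType.Exports.
Local Open Scope ring_scope.
Set Implicit Arguments. Unset Strict Implicit.

Section DotProduct.
Variables (R : realType) (k : nat).
Implicit Types (v w : 'cV[R]_k).

Lemma dotvC v w : dotv v w = dotv w v.
Proof. by apply: eq_bigr => i _; rewrite mulrC. Qed.

Lemma dotvDl v v' w : dotv (v + v') w = dotv v w + dotv v' w.
Proof. by rewrite /dotv -big_split; apply: eq_bigr => i _; rewrite !mxE mulrDl. Qed.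

Lemma dotvDr v w w' : dotv v (w + w') = dotv v w + dotv v w'.
Proof. by rewrite dotvC dotvDl !(dotvC v). Qed.

Lemma dotvZl a v w : dotv (a *: v) w = a * dotv v w.
Proof. by rewrite /dotv mulr_sumr; apply: eq_bigr => i _; rewrite !mxE mulrA. Qed.

Lemma dotvZr a v w : dotv v (a *: w) = a * dotv v w.
Proof. by rewrite dotvC dotvZl dotvC. Qed.

Lemma dotvNl v w : dotv (- v) w = - dotv v w.
Proof. by rewrite -scaleN1r dotvZl mulN1r. Qed.

Lemma dotvNr v w : dotv v (- w) = - dotv v w.
Proof. by rewrite dotvC dotvNl dotvC. Qed.

Lemma dotvBl v v' w : dotv (v - v') w = dotv v w - dotv v' w.
Proof. by rewrite dotvDl dotvNl. Qed.

Lemma dotvBr v w w' : dotv v (w - w') = dotv v w - dotv v w'.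
Proof. by rewrite dotvDr dotvNr. Qed.

Lemma dotv0l w : dotv 0 w = 0.
Proof. by rewrite /dotv big1 // => i _; rewrite mxE mul0r. Qed.

Lemma dotv_sqrD v w : dotv (v + w) (v + w) = dotv v v + 2 * dotv v w + dotv w w.
Proof. rewrite !(dotvDl, dotvDr) (dotvC w v); ring. Qed.

Lemma dotvv_ge0 v : 0 <= dotv v v.
Proof. by rewrite /dotv sumr_ge0 // => i _; rewrite -expr2 sqr_ge0. Qed.

Lemma dotvv_eq0 v : (dotv v v == 0) = (v == 0).
Proof.
apply/idP/eqP => [|->]; last by rewrite dotv0l.
rewrite /dotv psumr_eq0 => [/allP v0|i _]; last by rewrite -expr2 sqr_ge0.
apply/matrixP => i j; rewrite (ord1 j) mxE; apply/eqP.
by have := v0 i (mem_index_enum _); rewrite /= mulf_eq0 orbb.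
Qed.

Lemma enorm_sqr v : enorm v ^+ 2 = dotv v v.
Proof. by rewrite sqr_sqrtr // dotvv_ge0. Qed.

Lemma dotv_sqr_le v w : dotv v w ^+ 2 <= dotv v v * dotv w w.
Proof.
have [/eqP v0|v0] := eqVneq (dotv v v) 0.
  by move: (v0); rewrite dotvv_eq0 => /eqP->; rewrite !dotv0l expr0n mul0r.
have vv_gt0 : 0 < dotv v v by rewrite lt_def v0 dotvv_ge0.
set t := dotv v w / dotv v v.
have tE : t * dotv v v = dotv v w by rewrite mulfVK.
have := dotvv_ge0 (w - t *: v).
rewrite dotv_sqrD !(dotvNl, dotvNr, dotvZl, dotvZr) (dotvC w v).
nra.
Qed.

Lemma normr_dotv_le v w : `|dotv v w| <= enorm v * enorm w.
Proof.
rewrite -sqrtr_sqr -sqrtrM ?dotvv_ge0 // ler_sqrt ?mulr_ge0 ?dotvv_ge0 //.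
exact: dotv_sqr_le.
Qed.

Lemma dotv_ge0 v w : vle 0 v -> vle 0 w -> 0 <= dotv v w.
Proof.
move=> v0 w0; rewrite /dotv sumr_ge0 // => i _.
by have := v0 i; have := w0 i; rewrite !mxE => w0i v0i; apply: mulr_ge0.
Qed.

Lemma vle_subr_ge0 v w : vle v w -> vle 0 (w - v).
Proof. by move=> vw i; rewrite !mxE subr_ge0. Qed.

End DotProduct.

Lemma dotv_mulmx (R : realType) (k l : nat) (M : 'M[R]_(k, l)) v w :
  dotv (M *m v) w = dotv v (M^T *m w).
Proof.
rewrite /dotv; under eq_bigr do rewrite mxE big_distrl /=.
rewrite exchange_big /=; apply: eq_bigr => j _.
rewrite mxE big_distrr /=; apply: eq_bigr => i _; rewrite !mxE; ring.
Qed.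

Definition qform (R : realType) (k : nat) (A : 'M[R]_k) (h : 'cV[R]_k) : R :=
  dotv h (A *m h).

Section QuadraticForm.
Variables (R : realType) (k : nat).
Implicit Types (A B : 'M[R]_k) (h x : 'cV[R]_k).

Lemma qformZ A a h : qform A (a *: h) = a ^+ 2 * qform A h.
Proof. by rewrite /qform -scalemxAr dotvZl dotvZr expr2 mulrA. Qed.

Lemma qformN A h : qform A (- h) = qform A h.
Proof. by rewrite /qform mulmxN dotvNl dotvNr opprK. Qed.

Lemma qformNmx A h : qform (- A) h = - qform A h.
Proof. by rewrite /qform mulNmx dotvNr. Qed.

Lemma qformBscalar A mu h : qform (A - mu%:M) h = qform A h - mu * dotv h h.
Proof. by rewrite /qform mulmxBl mul_scalar_mx dotvBr dotvZr. Qed.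

Lemma qformD A x h : A^T = A ->
  qform A (x + h) = qform A x + 2 * dotv (A *m x) h + qform A h.
Proof.
move=> AT; rewrite /qform mulmxDr !(dotvDl, dotvDr) (dotvC x (A *m h)).
by rewrite dotv_mulmx AT (dotvC h (A *m x)); ring.
Qed.

Lemma qform_lb_of_sphere A mu :
  (forall y, dotv y y = 1 -> mu <= qform A y) -> forall h, mu * dotv h h <= qform A h.
Proof.
move=> sphere_lb h; have [->|h0] := eqVneq h 0.
  by rewrite /qform !dotv0l mulr0.
have hh_gt0 : 0 < dotv h h by rewrite lt_def dotvv_eq0 h0 dotvv_ge0.
have s2 : Num.sqrt (dotv h h) ^+ 2 = dotv h h by rewrite sqr_sqrtr // ltW.
have := sphere_lb ((Num.sqrt (dotv h h))^-1 *: h).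
rewrite qformZ dotvZl dotvZr mulrA -expr2 exprVn s2 mulVf ?gt_eqF //.
by rewrite ler_pdivlMl // mulrC; apply.
Qed.

Lemma psd_qform_eq0 B x : B^T = B -> (forall h, 0 <= qform B h) ->
  qform B x = 0 -> B *m x = 0.
Proof.
move=> BT psdB Bx0; apply/eqP; rewrite -dotvv_eq0.
set z := B *m x; set G := dotv z z; set q := qform B z.
have line_ge0 t : 0 <= 2 * t * G + t ^+ 2 * q.
  by have := psdB (x + t *: z); rewrite qformD // qformZ Bx0 dotvZr -/z add0r mulrA.
rewrite eq_le dotvv_ge0 andbT leNgt; apply/negP => G_gt0.
have q_ge0 : 0 <= q := psdB z.
(* a small enough negative t makes 2 t G + t^2 q negative *)
set t := - G / (q + 1).
have tE : t * (q + 1) = - G by rewrite mulfVK // gt_eqF // ltr_wpDl.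
by have := line_ge0 t; nra.
Qed.

Lemma eigenvalue_of_qform_min A mu x : A^T = A -> x != 0 ->
  (forall h, mu * dotv h h <= qform A h) -> qform A x = mu * dotv x x ->
  eigenvalue A mu.
Proof.
move=> AT x0 lb xmin.
have BT : (A - mu%:M)^T = A - mu%:M by rewrite linearB /= AT tr_scalar_mx.
have /eqP : (A - mu%:M) *m x = 0.
  apply: psd_qform_eq0 => [//|h|]; rewrite qformBscalar ?subr_ge0 //.
  by rewrite xmin subrr.
rewrite mulmxBl mul_scalar_mx subr_eq0 => /eqP Ax.
apply/eigenvalueP; exists x^T; last by rewrite trmx_eq0.
by rewrite -{1}AT -trmx_mul Ax linearZ.
Qed.

Lemma eigenvalueNmx A mu : eigenvalue (- A) mu -> eigenvalue A (- mu).
Proof.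
case/eigenvalueP => v vA v0; apply/eigenvalueP; exists v => //.
by rewrite scaleNr -vA mulmxN opprK.
Qed.

End QuadraticForm.

Section Compactness.
Local Open Scope classical_set_scope.
Variables (R : realType) (d : nat).

Lemma continuous_dotv_affine k (M N : 'M[R]_(k, d)) (b c : 'cV[R]_k) :
  continuous (fun r : 'rV[R]_d => dotv (M *m r^T + b) (N *m r^T + c)).
Proof.
have affine_coord (P : 'M[R]_(k, d)) e i :
    continuous (fun r : 'rV[R]_d => (P *m r^T + e) i 0).
  have -> : (fun r : 'rV[R]_d => (P *m r^T + e) i 0) =
            (fun r => \sum_j P i j * r 0 j + e i 0).
    apply/funext => r; rewrite !mxE; congr (_ + _).
    by apply: eq_bigr => j _; rewrite !mxE.
  move=> r; apply: continuousD; last exact: cst_continuous.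
  apply: (continuous_big add_continuous) => j _ s.
  by apply: continuousM; [exact: cst_continuous | exact: coord_continuous].
apply: (continuous_big add_continuous) => i _ r.
by apply: continuousM; apply: affine_coord.
Qed.

Lemma cV_attains_min (f : 'cV[R]_d -> R) (S : set 'cV[R]_d) :
  continuous (fun r : 'rV[R]_d => f r^T) -> compact [set r : 'rV[R]_d | S r^T] ->
  S !=set0 -> exists2 x, S x & forall y, S y -> f x <= f y.
Proof.
move=> fc Sc [x Sx].
have Sr0 : [set r : 'rV[R]_d | S r^T] !=set0 by exists x^T; rewrite /= trmxK.
have [r /set_mem Sr rmin] := compact_EVT_min Sr0 Sc (continuous_subspaceT fc).
exists r^T => // y Sy; have := rmin y^T; rewrite trmxK; apply.
by rewrite inE /= trmxK.
Qed.

Lemma box_compact (umin umax : 'cV[R]_d) :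
  compact [set r : 'rV[R]_d | box umin umax r^T].
Proof.
rewrite (_ : [set r : 'rV[R]_d | box umin umax r^T] =
    [set r | forall i, [set x : R | x \in `[umin i 0, umax i 0]%R] (r ord0 i)]).
  by apply: (rV_compact (A := fun i => [set x : R | x \in `[umin i 0, umax i 0]%R]))
    => i; exact: segment_compact.
apply/funext => r; apply/propext; split => [[lo hi] i|r_in].
  by have := lo i; have := hi i; rewrite !mxE (ord1 0) /= in_itv /= => -> ->.
by split => i; have := r_in i; rewrite /= in_itv !mxE (ord1 0) => /andP[].
Qed.

Lemma unit_sphere_compact : compact [set r : 'rV[R]_d | dotv r^T r^T = 1].
Proof.
apply: (@subclosed_compact _ _ [set r | box (const_mx (-1)) (const_mx 1) r^T]).
- apply: (@preimage_closed _ _ (fun r : 'rV[R]_d => dotv r^T r^T) [set x | x = 1]);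
    last exact: closed_eq.
  move=> r _; have := @continuous_dotv_affine d 1%:M 1%:M 0 0 r.
  by under eq_fun do rewrite mul1mx addr0.
- exact: box_compact.
move=> r /= r1; have coord_le1 i : r^T i 0 ^+ 2 <= 1.
  rewrite -r1 /dotv (bigD1 i) //= expr2 lerDl sumr_ge0 // => j _.
  by rewrite -expr2 sqr_ge0.
by split => i; have := coord_le1 i; rewrite !mxE; nra.
Qed.

End Compactness.

Section Rayleigh.
Variables (R : realType) (d : nat).
Hypothesis d_gt0 : (0 < d)%N.
Implicit Types (A : 'M[R]_d) (h : 'cV[R]_d).

Lemma exists_eigenvalue_qform_lb A : A^T = A ->
  exists2 mu, eigenvalue A mu & forall h, mu * dotv h h <= qform A h.
Proof.
move=> AT; pose i0 := Ordinal d_gt0.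
have e0_unit : dotv (delta_mx i0 0) (delta_mx i0 0) = 1 :> R.
  rewrite /dotv (bigD1 i0) //= big1 => [|j /negbTE ji0]; rewrite !mxE ?ji0 ?mulr0 //.
  by rewrite eqxx mulr1 addr0.
have qform_cont : continuous (fun r : 'rV[R]_d => qform A r^T).
  have := @continuous_dotv_affine R d d 1%:M A 0 0.
  by under eq_fun do rewrite mul1mx !addr0.
have [x x_unit x_min] := cV_attains_min qform_cont (@unit_sphere_compact R d)
  (ex_intro (fun y => dotv y y = 1) _ e0_unit).
have lb := qform_lb_of_sphere x_min.
exists (qform A x) => //; apply: (eigenvalue_of_qform_min (x := x) AT _ lb).
  by rewrite -dotvv_eq0 x_unit oner_neq0.
by rewrite x_unit mulr1.
Qed.

Lemma min_eigenvalue_qform_le A lmin h : A^T = A -> min_eigenvalue A lmin ->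
  lmin * dotv h h <= qform A h.
Proof.
move=> AT [_ lmin_le]; have [mu /lmin_le lmin_mu lb] := exists_eigenvalue_qform_lb AT.
by apply: le_trans (lb h); rewrite ler_wpM2r ?dotvv_ge0.
Qed.

Lemma qform_le_max_eigenvalue A lmax h : A^T = A -> max_eigenvalue A lmax ->
  qform A h <= lmax * dotv h h.
Proof.
move=> AT [_ le_lmax].
have NAT : (- A)^T = - A by rewrite linearN /= AT.
have [mu /eigenvalueNmx /le_lmax mu_lmax lb] := exists_eigenvalue_qform_lb NAT.
have := lb h; rewrite qformNmx; have := dotvv_ge0 h; nra.
Qed.

End Rayleigh.

Section BoxConstraints.
Variables (R : realType) (d : nat) (umin umax : 'cV[R]_d).
Implicit Types (u v ustar : 'cV[R]_d).

Lemma box_midpoint u v : box umin umax u -> box umin umax v ->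
  box umin umax (2^-1 *: (u + v)).
Proof.
move=> [lo_u hi_u] [lo_v hi_v]; split => i; rewrite !mxE;
  have := lo_u i; have := hi_u i; have := lo_v i; have := hi_v i; lra.
Qed.

Lemma slackness_dotv_ge0 ustar eta1 eta2 u :
  vle 0 eta1 -> vle 0 eta2 ->
  dotv eta1 (ustar - umax) = 0 -> dotv eta2 (umin - ustar) = 0 ->
  box umin umax u -> 0 <= dotv eta2 (u - ustar) - dotv eta1 (u - ustar).
Proof.
move=> eta1_ge0 eta2_ge0 slack1 slack2 [lo hi].
have -> : dotv eta2 (u - ustar) = dotv eta2 (u - umin) + dotv eta2 (umin - ustar).
  by rewrite -dotvDr subrKA.
have -> : dotv eta1 (u - ustar) = - (dotv eta1 (umax - u) + dotv eta1 (ustar - umax)).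
  by rewrite -dotvDr (addrC (umax - u)) subrKA -dotvNr opprB.
rewrite slack1 slack2 !addr0 opprK addr_ge0 //.
  by apply: dotv_ge0 => //; apply: vle_subr_ge0.
by apply: dotv_ge0 => //; apply: vle_subr_ge0.
Qed.

End BoxConstraints.

Section RegularizedLeastSquares.
Variables (R : realType) (m d : nat) (Fc : 'M[R]_(m, d)) (nu : R).
Variables (phix xref : 'cV[R]_m).
Local Notation A := (Fc^T *m Fc + nu%:M).
Local Notation L := (Ln Fc nu phix xref).
Implicit Types (u v h ustar : 'cV[R]_d).

Lemma gram_tr : A^T = A.
Proof. by rewrite linearD /= trmx_mul trmxK tr_scalar_mx. Qed.

Lemma qform_gramE h : qform A h = dotv (Fc *m h) (Fc *m h) + nu * dotv h h.
Proof.
rewrite /qform mulmxDl mul_scalar_mx dotvDr dotvZr -mulmxA.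
by rewrite (dotvC h) dotv_mulmx trmxK.
Qed.

Lemma LnE u :
  L u = dotv (Fc *m u + (phix - xref)) (Fc *m u + (phix - xref)) + nu * dotv u u.
Proof. by rewrite /Ln !enorm_sqr addrAC addrC addrA. Qed.

Lemma Ln_addE u h :
  L (u + h) = L u + 2 * dotv (A *m u + Fc^T *m (phix - xref)) h + qform A h.
Proof.
have -> : A *m u + Fc^T *m (phix - xref) = Fc^T *m (Fc *m u + (phix - xref)) + nu *: u.
  by rewrite mulmxDl mul_scalar_mx mulmxDr -mulmxA addrAC.
rewrite !LnE qform_gramE (mulmxDr Fc u h) (addrAC (Fc *m u)).
rewrite (dotv_sqrD (Fc *m u + _)) (dotv_sqrD u h).
by rewrite (dotvDl (Fc^T *m _)) dotvZl (dotv_mulmx Fc^T) trmxK; ring.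
Qed.

Lemma Ln_midpoint u v :
  L u + L v = 2 * L (2^-1 *: (u + v)) + 2 * qform A (2^-1 *: (v - u)).
Proof.
set c := 2^-1 *: (u + v); set p := 2^-1 *: (v - u).
have -> : u = c + - p by apply/matrixP => i j; rewrite !mxE; field.
have -> : v = c + p by apply/matrixP => i j; rewrite !mxE; field.
by rewrite !Ln_addE qformN dotvNr; ring.
Qed.

Lemma Ln_sub_lagrangeE umin umax ustar eta1 eta2 u :
  lagrange_mult Fc nu phix xref umin umax ustar eta1 eta2 ->
  L u - L ustar = dotv eta2 (u - ustar) - dotv eta1 (u - ustar) + qform A (u - ustar).
Proof.
move=> [_ [_ [stationary _]]].
have grad : eta2 - eta1 = 2 *: (A *m ustar + Fc^T *m (phix - xref)).
  rewrite -[LHS]addr0 -stationary; apply/matrixP => i j; rewrite !mxE; ring.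
rewrite -{1}(subrKC ustar u) Ln_addE -dotvZl -grad dotvBl; ring.
Qed.

Lemma Ln_attains_min_on_box umin umax : vle umin umax ->
  exists2 u, box umin umax u & forall v, box umin umax v -> L u <= L v.
Proof.
move=> le_umin_umax; apply: cV_attains_min; last first.
- by exists umin; split => // i; exact: lexx.
- exact: box_compact.
have -> : (fun r : 'rV[R]_d => L r^T) =
    (fun r => dotv (Fc *m r^T + (phix - xref)) (Fc *m r^T + (phix - xref)))
    \+ (fun=> nu) \* (fun r => dotv (1%:M *m r^T + 0) (1%:M *m r^T + 0)).
  by apply/funext => r; rewrite /= LnE mul1mx addr0.
move=> r; apply: continuousD; first exact: continuous_dotv_affine.
by apply: continuousM; [exact: cst_continuous | exact: continuous_dotv_affine].
Qed.

Lemma Ln_box_minimizer_unique umin umax u v : 0 < nu ->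
  box umin umax u -> (forall w, box umin umax w -> L u <= L w) ->
  box umin umax v -> (forall w, box umin umax w -> L v <= L w) -> v = u.
Proof.
move=> nu_gt0 box_u u_min box_v v_min; set p := 2^-1 *: (v - u).
have Qp_le0 : qform A p <= 0.
  have := Ln_midpoint u v; have := u_min _ (box_midpoint box_u box_v).
  by have := u_min _ box_v; have := v_min _ box_u; rewrite -/p; lra.
have /eqP : dotv p p = 0.
  by have := qform_gramE p; have := dotvv_ge0 (Fc *m p); have := dotvv_ge0 p; nra.
by rewrite dotvv_eq0 scaler_eq0 invr_eq0 pnatr_eq0 /= subr_eq0 => /eqP.
Qed.

Lemma Ln_growth_bounds umin umax ustar eta1 eta2 lmin lmax u : (0 < d)%N ->
  lagrange_mult Fc nu phix xref umin umax ustar eta1 eta2 ->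
  min_eigenvalue A lmin -> max_eigenvalue A lmax -> box umin umax u ->
  lmin * enorm (u - ustar) ^+ 2 <= L u - L ustar /\
  L u - L ustar <= (enorm eta1 + enorm eta2) * enorm (u - ustar)
                   + lmax * enorm (u - ustar) ^+ 2.
Proof.
move=> d_gt0 KKT lmin_min lmax_max box_u.
rewrite (Ln_sub_lagrangeE u KKT) enorm_sqr.
case: KKT => eta1_ge0 [eta2_ge0 [_ [slack1 slack2]]].
have lin_ge0 := slackness_dotv_ge0 eta1_ge0 eta2_ge0 slack1 slack2 box_u.
set h := u - ustar in lin_ge0 *.
have Q_lo := min_eigenvalue_qform_le d_gt0 h gram_tr lmin_min.
have Q_hi := qform_le_max_eigenvalue d_gt0 h gram_tr lmax_max.
have cs1 := normr_dotv_le eta1 h; have cs2 := normr_dotv_le eta2 h.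
have n1 := ler_norm (- dotv eta1 h); rewrite normrN in n1.
have n2 := ler_norm (dotv eta2 h).
split; lra.
Qed.

End RegularizedLeastSquares.

Theorem mainTheorem1 (R : realType) (d m : nat) (hd : (0 < d)%N) (hm : (0 < m)%N)
  (X : 'cV[R]_m -> Prop) (umin umax : 'cV[R]_d)
  (humin : forall i : 'I_d, umin i 0 < umax i 0)
  (Phis : 'cV[R]_m -> 'cV[R]_m) (hPhis : forall x, X x -> X (Phis x))
  (Fc : 'M[R]_(m, d)) (nu : R) (hnu : 0 < nu)
  (hA : \rank (Fc^T *m Fc + nu%:M)%R = d)
  (xn xref : 'cV[R]_m) (hxn : X xn) (hxref : X xref) :
  exists ustar : 'cV[R]_d,
    (box umin umax ustar /\
     (forall u, box umin umax u -> Ln Fc nu (Phis xn) xref ustar <= Ln Fc nu (Phis xn) xref u)) /\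
    (forall v, box umin umax v ->
       (forall u, box umin umax u -> Ln Fc nu (Phis xn) xref v <= Ln Fc nu (Phis xn) xref u) ->
       v = ustar) /\
    (forall (eta1 eta2 : 'cV[R]_d) (lmin lmax : R),
       lagrange_mult Fc nu (Phis xn) xref umin umax ustar eta1 eta2 ->
       min_eigenvalue (Fc^T *m Fc + nu%:M) lmin ->
       max_eigenvalue (Fc^T *m Fc + nu%:M) lmax ->
       forall u, box umin umax u ->
         lmin * enorm (u - ustar) ^+ 2
           <= Ln Fc nu (Phis xn) xref u - Ln Fc nu (Phis xn) xref ustar /\
         Ln Fc nu (Phis xn) xref u - Ln Fc nu (Phis xn) xref ustar
           <= (enorm eta1 + enorm eta2) * enorm (u - ustar) + lmax * enorm (u - ustar) ^+ 2).
Proof.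
have [ustar box_ustar ustar_min] :=
  Ln_attains_min_on_box Fc nu (Phis xn) xref (fun i => ltW (humin i)).
exists ustar; split; first by [].
split=> [v box_v v_min | eta1 eta2 lmin lmax KKT lmin_min lmax_max u box_u].
  exact: Ln_box_minimizer_unique hnu box_ustar ustar_min box_v v_min.
exact: Ln_growth_bounds hd KKT lmin_min lmax_max box_u.
Qed.
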